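(* Let $\mathbb{K}$ be a field of characteristic not $2,3$ and let $\mathbb{T}=\mathbb{K}^3$ with multiplication $$x\circ y=\Big(x_1y_1-\tfrac12x_2y_3-\tfrac12x_3y_2,\ x_2y_2-\tfrac12x_1y_3-\tfrac12x_3y_1,\ x_3y_3-\tfrac12x_1y_2-\tfrac12x_2y_1\Big).$$ Then $\mathbb{T}$ is isospectral. If $\mathbb{K}$ is infinite, $\mathbb{T}$ is non-generic. The set of nonzero idempotents of $\mathbb{T}$ is $$\{(x_1,x_2,x_3)\in\mathbb{K}^3:\ x_1^2+x_2^2+x_3^2=x_1+x_2+x_3=1\},$$ and every nonzero idempotent has spectrum $\{1,-\tfrac12,\tfrac12\}$.
   Context: For an idempotent $c$, its spectrum is the multiset of eigenvalues of $L_c:x\mapsto c\circ x$. An algebra is isospectral if all its nonzero idempotents have the same spectrum. A commutative algebra of dimension $n$ is generic if (over an algebraic closure / complexification) it has exactly $2^n$ distinct idempotents (including $0$). *)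

From HB Require Import structures.
From mathcomp Require Import all_boot all_order all_algebra all_field.
Set Implicit Arguments. Unset Strict Implicit. Unset Printing Implicit Defensive.
Import Order.TTheory GRing.Theory Num.Theory.
Local Open Scope ring_scope.

Definition i0 : 'I_3 := @Ordinal 3 0 isT.
Definition i1 : 'I_3 := @Ordinal 3 1 isT.
Definition i2 : 'I_3 := @Ordinal 3 2 isT.

Definition tmul (R : fieldType) (x y : 'rV[R]_3) : 'rV[R]_3 :=
  let x1 := x 0 i0 in let x2 := x 0 i1 in let x3 := x 0 i2 in
  let y1 := y 0 i0 in let y2 := y 0 i1 in let y3 := y 0 i2 in
  \row_(k < 3)
    (if k == i0 then x1 * y1 - 2^-1 * x2 * y3 - 2^-1 * x3 * y2
     else if k == i1 then x2 * y2 - 2^-1 * x1 * y3 - 2^-1 * x3 * y1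
     else x3 * y3 - 2^-1 * x1 * y2 - 2^-1 * x2 * y1).

Definition is_idempotent (R : fieldType) (c : 'rV[R]_3) : Prop := tmul c c = c.

Definition Lmat (R : fieldType) (c : 'rV[R]_3) : 'M[R]_3 :=
  \matrix_(i < 3, j < 3) (tmul c (delta_mx 0 j)) 0 i.

(* The spectrum of an idempotent c is the multiset of eigenvalues of L_c,
   i.e. it is encoded by the characteristic polynomial of L_c. *)
Definition spectrum_poly (R : fieldType) (c : 'rV[R]_3) : {poly R} :=
  char_poly (Lmat c).

Definition isospectral (R : fieldType) : Prop :=
  forall c d : 'rV[R]_3, is_idempotent c -> c != 0 ->
    is_idempotent d -> d != 0 -> spectrum_poly c = spectrum_poly d.

Definition has_2n_idempotents (L : closedFieldType) : Prop :=
  exists s : seq 'rV[L]_3,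
    [/\ uniq s, size s = (2 ^ 3)%N & forall x, x \in s <-> is_idempotent x].

(* T over K is generic if over an algebraic closure (any algebraically
   closed extension L of K) it has exactly 2^3 idempotents. *)
Definition nongeneric (K : fieldType) : Prop :=
  forall (L : closedFieldType) (f : {rmorphism K -> L}), ~ has_2n_idempotents L.

Definition infinite_field (K : fieldType) : Prop :=
  forall s : seq K, exists x : K, x \notin s.

From HB Require Import structures.
From mathcomp Require Import all_boot all_order all_algebra all_field.
From mathcomp Require Import ring.
Import Order.TTheory GRing.Theory Num.Theory.
Local Open Scope ring_scope.
Set Implicit Arguments. Unset Strict Implicit. Unset Printing Implicit Defensive.

(* Since 2 is invertible, c is idempotent iff c1^2 - c2 c3 = c1 and cyclically.
   Subtracting two of these equations gives (c_i - c_j)(s - 1) = 0 with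
   s = c1 + c2 + c3, so a nonzero idempotent has s = 1; and when s = 1 each
   equation reads c_i^2 - c_j c_k - c_i s = -e with e = c1 c2 + c2 c3 + c3 c1.
   Hence the nonzero idempotents are the points with s = 1 and e = 0 (summing
   the equations gives 3 e = 0).  The characteristic polynomial of L_c depends
   on c only through s and e, whence isospectrality.  Over an algebraically
   closed field, s = 1 and e = 0 is a quadratic equation in c2 for every
   prescribed c1, so there are infinitely many idempotents. *)

Definition esym1 (R : fieldType) (c : 'rV[R]_3) : R := c 0 i0 + c 0 i1 + c 0 i2.

Definition esym2 (R : fieldType) (c : 'rV[R]_3) : R :=
  c 0 i0 * c 0 i1 + c 0 i1 * c 0 i2 + c 0 i2 * c 0 i0.

Lemma ord3P (k : 'I_3) : [\/ k = i0, k = i1 | k = i2].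
Proof.
by case: k => [[|[|[|//]]] lt_k3]; [apply: Or31 | apply: Or32 | apply: Or33];
  apply: val_inj.
Qed.

Section Idempotents.

Variable K : fieldType.
Hypothesis two_neq0 : 2%:R != 0 :> K.

Lemma is_idempotentE (c : 'rV[K]_3) :
  is_idempotent c <->
  [/\ c 0 i0 * c 0 i0 - c 0 i1 * c 0 i2 = c 0 i0,
      c 0 i1 * c 0 i1 - c 0 i0 * c 0 i2 = c 0 i1
    & c 0 i2 * c 0 i2 - c 0 i0 * c 0 i1 = c 0 i2].
Proof.
have half_sum (a b d : K) : a - 2^-1 * b * d - 2^-1 * d * b = a - b * d.
  by rewrite -[in RHS](mul1r (b * d)) -[1 in RHS](mulfV two_neq0); ring.
rewrite /is_idempotent /tmul; split.
  move=> /rowP cc; split; [move: (cc i0) | move: (cc i1) | move: (cc i2)];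
  by rewrite !mxE /= half_sum.
case=> E0 E1 E2; apply/rowP => k; rewrite !mxE.
by case: (ord3P k) => ->; rewrite /= half_sum.
Qed.


Lemma idempotent_sum_eq1 (c : 'rV[K]_3) :
  is_idempotent c -> c != 0 -> esym1 c = 1.
Proof.
move=> /is_idempotentE[E0 E1 E2]; apply: contraNeq; rewrite /esym1.
set x := c 0 i0 in E0 E1 E2 *; set y := c 0 i1 in E0 E1 E2 *.
set z := c 0 i2 in E0 E1 E2 * => s_neq1.
have s1_neq0 : x + y + z - 1 != 0 by rewrite subr_eq0.
have coord_eq (a b : K) : (a - b) * (x + y + z - 1) = 0 -> a = b.
  by move/eqP; rewrite mulf_eq0 (negbTE s1_neq0) orbF subr_eq0 => /eqP.
have xy : x = y.
  apply: coord_eq; transitivity ((x * x - y * z - x) - (y * y - x * z - y)).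
    by ring.
  by rewrite E0 E1 !subrr.
have yz : y = z.
  apply: coord_eq; transitivity ((y * y - x * z - y) - (z * z - x * y - z)).
    by ring.
  by rewrite E1 E2 !subrr.
have z0 : z = 0 by rewrite -E2 xy yz subrr.
apply/eqP/rowP => k; rewrite mxE.
by case: (ord3P k) => ->; rewrite -/x -/y -/z ?xy ?yz.
Qed.

Lemma idempotent_of_esym (c : 'rV[K]_3) :
  esym1 c = 1 -> esym2 c = 0 -> is_idempotent c.
Proof.
have diag_eq (a b d : K) : a + b + d = 1 -> a * b + b * d + d * a = 0 ->
    a * a - b * d = a.
  move=> s1 e0; apply/eqP; rewrite -subr_eq0; apply/eqP.
  transitivity (a * (a + b + d - 1) - (a * b + b * d + d * a)); first by ring.
  by rewrite s1 e0 subrr mulr0 subr0.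
rewrite /esym1 /esym2 => s1 e0; apply/is_idempotentE.
by split; apply: diag_eq; rewrite -?s1 -?e0; ring.
Qed.

Lemma esym1_eq1_sum_sqE (c : 'rV[K]_3) : esym1 c = 1 ->
  (c 0 i0 ^+ 2 + c 0 i1 ^+ 2 + c 0 i2 ^+ 2 = 1 <-> esym2 c = 0).
Proof.
move=> s1; have -> : c 0 i0 ^+ 2 + c 0 i1 ^+ 2 + c 0 i2 ^+ 2 = 1 - 2%:R * esym2 c.
  by rewrite -(expr1n _ 2) -{1}s1 /esym1 /esym2; ring.
split=> [|->]; last by rewrite mulr0 subr0.
move=> /(congr1 (fun q => 1 - q)); rewrite subrr opprB addrC subrK => /eqP.
by rewrite mulf_eq0 (negbTE two_neq0) => /eqP.
Qed.

Lemma spectrum_polyE (c : 'rV[K]_3) :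
  spectrum_poly c =
    'X^3 - (esym1 c)%:P * 'X^2
    + (3%:R * esym2 c / 2%:R - esym1 c ^+ 2 / 4%:R)%:P * 'X
    + ((esym1 c ^+ 3 - 3%:R * esym1 c * esym2 c) / 4%:R)%:P.
Proof.
(* The determinant also contributes (3 h^2 + 2 h^3 - 1) c1 c2 c3, which
   vanishes only because h = 1/2. *)
set s := esym1 c; set e := esym2 c; set h : K := 2^-1.
have -> : 4%:R^-1 = h ^+ 2 :> K by rewrite /h exprVn -natrX.
have -> : 3%:R * e / 2%:R - s ^+ 2 * h ^+ 2 = e - h ^+ 2 * (s ^+ 2 - 2%:R * e).
  have h_quad : 3%:R * h = 1 + 2%:R * h ^+ 2 by rewrite /h; field.
  by rewrite -/h mulrAC h_quad; ring.
have -> : (s ^+ 3 - 3%:R * s * e) * h ^+ 2 = (s ^+ 3 - 3%:R * s * e) * h ^+ 2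
    + (3%:R * h ^+ 2 + 2%:R * h ^+ 3 - 1) * (c 0 i0 * c 0 i1 * c 0 i2).
  have h_cubic : 3%:R * h ^+ 2 + 2%:R * h ^+ 3 = 1 by rewrite /h; field.
  by rewrite h_cubic subrr mul0r addr0.
rewrite /s /e /esym1 /esym2 /spectrum_poly /char_poly /char_poly_mx.
rewrite (expand_det_row _ ord0) !big_ord_recl big_ord0 /cofactor.
rewrite !(expand_det_row _ ord0) !big_ord_recl !big_ord0 /cofactor !det_mx11.
rewrite !mxE /= !(polyCN, polyCM, polyCD, polyCB).
ring.
Qed.

Lemma spectrum_poly_idempotent (c : 'rV[K]_3) :
  esym1 c = 1 -> esym2 c = 0 ->
  spectrum_poly c = ('X - 1%:P) * ('X + (2^-1)%:P) * ('X - (2^-1)%:P).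
Proof.
move=> s1 e0; rewrite spectrum_polyE s1 e0 !expr1n !(mulr0, mul0r, mul1r, subr0).
have -> : 4%:R^-1 = 2^-1 ^+ 2 :> K by rewrite exprVn -natrX.
by rewrite !(polyCN, polyCB, polyCM, polyC0, polyC_exp); ring.
Qed.

Hypothesis three_neq0 : 3%:R != 0 :> K.

Lemma idempotent_esym2_eq0 (c : 'rV[K]_3) :
  is_idempotent c -> esym1 c = 1 -> esym2 c = 0.
Proof.
move=> /is_idempotentE[E0 E1 E2] s1.
have : 3%:R * esym2 c = esym1 c ^+ 2 - esym1 c.
  transitivity (esym1 c ^+ 2 - ((c 0 i0 * c 0 i0 - c 0 i1 * c 0 i2)
    + (c 0 i1 * c 0 i1 - c 0 i0 * c 0 i2) + (c 0 i2 * c 0 i2 - c 0 i0 * c 0 i1))).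
    by rewrite /esym1 /esym2; ring.
  by rewrite E0 E1 E2.
by rewrite s1 expr1n subrr => /eqP; rewrite mulf_eq0 (negbTE three_neq0) => /eqP.
Qed.

Lemma nonzero_idempotentP (c : 'rV[K]_3) :
  (is_idempotent c /\ c != 0) <-> (esym1 c = 1 /\ esym2 c = 0).
Proof.
split=> [[c_idem c_neq0] | [s1 e0]].
  have s1 := idempotent_sum_eq1 c_idem c_neq0.
  by split; last exact: idempotent_esym2_eq0.
split; first exact: idempotent_of_esym.
by apply: contra_eq_neq s1 => ->; rewrite /esym1 !mxE !addr0 eq_sym oner_neq0.
Qed.

End Idempotents.

Section ClosedFieldIdempotents.

Variable L : closedFieldType.
Hypothesis two_neq0 : 2%:R != 0 :> L.

Lemma idempotent_with_coord0 (t : L) :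
  exists c : 'rV[L]_3, is_idempotent c /\ c 0 i0 = t.
Proof.
have [y y_root] := @solve_monicpoly L 2 (nth 0 [:: t * (1 - t); 1 - t]) isT.
rewrite !big_ord_recl big_ord0 /= in y_root.
exists (\row_k [:: t; y; 1 - t - y]`_k); split; last by rewrite mxE.
apply: idempotent_of_esym => //; rewrite /esym1 /esym2 !mxE /=; first by ring.
transitivity (- (y ^+ 2 - (t * (1 - t) + (1 - t) * y))); first by ring.
by rewrite y_root; ring.
Qed.

Lemma idempotents_with_coord0 (ts : seq L) :
  exists2 u : seq 'rV[L]_3,
    [seq c 0 i0 | c : 'rV[L]_3 <- u] = ts & {in u, forall c, is_idempotent c}.
Proof.
elim: ts => [|t ts [u u_coord u_idem]]; first by exists [::].
have [c [c_idem c_coord]] := idempotent_with_coord0 t.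
exists (c :: u); first by rewrite /= c_coord u_coord.
by move=> d; rewrite inE => /predU1P[->|/u_idem].
Qed.

End ClosedFieldIdempotents.

Lemma infinite_field_uniq_seq (K : fieldType) (n : nat) :
  infinite_field K -> exists ts : seq K, uniq ts /\ size ts = n.
Proof.
move=> K_inf; elim: n => [|n [ts [ts_uniq ts_size]]]; first by exists [::].
by have [x x_new] := K_inf ts; exists (x :: ts); rewrite /= x_new ts_uniq ts_size.
Qed.

Lemma nongeneric_of_infinite (K : fieldType) :
  2%:R != 0 :> K -> infinite_field K -> nongeneric K.
Proof.
move=> two_neq0 K_inf L f [s [s_uniq s_size s_idem]].
have two_neq0L : 2%:R != 0 :> L by rewrite -(rmorph_nat f) fmorph_eq0.
(* Nine idempotents with distinct first coordinates: one more than 2^3. *)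
have [ts [ts_uniq ts_size]] := infinite_field_uniq_seq 9 K_inf.
have [u u_coord u_idem] := idempotents_with_coord0 two_neq0L (map f ts).
have u_uniq : uniq u.
  apply: (map_uniq (f := fun c : 'rV[L]_3 => c 0 i0)).
  by rewrite u_coord (map_inj_uniq (fmorph_inj f)).
have := uniq_leq_size u_uniq (fun c c_u => (s_idem c).2 (u_idem c c_u)).
by rewrite -(size_map (fun c : 'rV[L]_3 => c 0 i0) u) u_coord !size_map ts_size s_size.
Qed.

Theorem proposition9p6 (K : fieldType)
  (h2 : 2%:R != 0 :> K) (h3 : 3%:R != 0 :> K) :
  [/\ isospectral K,
      infinite_field K -> nongeneric K,
      (forall x : 'rV[K]_3,
         (is_idempotent x /\ x != 0) <->
         (x 0 i0 ^+ 2 + x 0 i1 ^+ 2 + x 0 i2 ^+ 2 = 1 /\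
          x 0 i0 + x 0 i1 + x 0 i2 = 1))
    & (forall c : 'rV[K]_3, is_idempotent c -> c != 0 ->
         spectrum_poly c = ('X - 1%:P) * ('X + (2^-1)%:P) * ('X - (2^-1)%:P))].
Proof.
have spectrum_nonzero_idempotent (c : 'rV[K]_3) : is_idempotent c -> c != 0 ->
    spectrum_poly c = ('X - 1%:P) * ('X + (2^-1)%:P) * ('X - (2^-1)%:P).
  move=> c_idem c_neq0.
  have [s1 e0] := (nonzero_idempotentP h2 h3 c).1 (conj c_idem c_neq0).
  exact: spectrum_poly_idempotent.
split=> //.
- by move=> c d c_idem c_neq0 d_idem d_neq0; rewrite !spectrum_nonzero_idempotent.
- exact: nongeneric_of_infinite.
- move=> x; rewrite nonzero_idempotentP //.
  by split=> [[s1 e0] | [q1 s1]]; split=> //; apply/(esym1_eq1_sum_sqE h2 s1).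
Qed.
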